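(* Let $d\ge1$. Then (i) $\{\beta(x,z):x\in\mathrm{dS}^d,z\in\Xi_+\}\cap\mathbb R=\{\beta(x,z):x\in\mathrm{dS}^d,z\in\Xi_-\}\cap\mathbb R=(-1,1)$; and (ii) $\mathrm{dS}^d=\partial\Xi_+\cap\partial\Xi_-$ (boundaries taken in $\mathbb C^{1+d}$).
   Context: On $\mathbb C^{1+d}$ let $\beta(z,w)=z_0w_0-z_1w_1-\dots-z_dw_d$ (complex bilinear), $V=\mathbb R^{1+d}$, $V_+=\{x\in V:x_0>0,\beta(x,x)>0\}$, $\mathrm{dS}^d_{\mathbb C}=\{z:\beta(z,z)=-1\}$, $\mathrm{dS}^d=\mathrm{dS}^d_{\mathbb C}\cap V$, and $\Xi_\pm=\mathrm{dS}^d_{\mathbb C}\cap(V\pm iV_+)$. *)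

From HB Require Import structures.
From mathcomp Require Import all_boot all_order all_algebra.
From mathcomp Require Import all_classical all_reals all_analysis.
From mathcomp Require Import complex.
Import Order.TTheory GRing.Theory Num.Theory numFieldNormedType.Exports.
Local Open Scope ring_scope.
Local Open Scope classical_set_scope.

Set Implicit Arguments.
Unset Strict Implicit.
Unset Printing Implicit Defensive.

(* Standard (modulus-metric) topology on the complex numbers R[i]:
   copied from the regular normed structure R[i]^o. *)
HB.instance Definition _ (R : rcfType) := PseudoPointedMetric.copy R[i] (R[i])^o.

(* Points of C^{1+d} are row vectors 'rV[R[i]]_(d.+1), indexed 0..d.
   The topology on C^{1+d} is the product (matrix) topology. *)

Definition beta (R : rcfType) (d : nat) (z w : 'rV[R[i]]_(d.+1)) : R[i] :=
  z 0 0 * w 0 0 - \sum_(j < d) z 0 (lift ord0 j) * w 0 (lift ord0 j).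

Definition betaR (R : rcfType) (d : nat) (x y : 'rV[R]_(d.+1)) : R :=
  x 0 0 * y 0 0 - \sum_(j < d) x 0 (lift ord0 j) * y 0 (lift ord0 j).

Definition Vplus (R : rcfType) (d : nat) : set 'rV[R]_(d.+1) :=
  [set x : 'rV[R]_(d.+1) | 0 < x 0 0 /\ 0 < betaR x x].
Arguments Vplus R d : clear implicits.

Definition cplx (R : rcfType) (d : nat) (x y : 'rV[R]_(d.+1)) : 'rV[R[i]]_(d.+1) :=
  \row_j Complex (x 0 j) (y 0 j).

Definition realv (R : rcfType) (d : nat) (x : 'rV[R]_(d.+1)) : 'rV[R[i]]_(d.+1) :=
  \row_j ((x 0 j)%:C)%C.

Definition dSC (R : rcfType) (d : nat) : set 'rV[R[i]]_(d.+1) :=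
  [set z : 'rV[R[i]]_(d.+1) | beta z z = -1].
Arguments dSC R d : clear implicits.

Definition dS (R : rcfType) (d : nat) : set 'rV[R[i]]_(d.+1) :=
  dSC R d `&` [set realv x | x in [set: 'rV[R]_(d.+1)]].
Arguments dS R d : clear implicits.

Definition Xiplus (R : rcfType) (d : nat) : set 'rV[R[i]]_(d.+1) :=
  dSC R d `&` [set z : 'rV[R[i]]_(d.+1) | exists x y, Vplus R d y /\ z = cplx x y].
Arguments Xiplus R d : clear implicits.
Definition Ximinus (R : rcfType) (d : nat) : set 'rV[R[i]]_(d.+1) :=
  dSC R d `&` [set z : 'rV[R[i]]_(d.+1) | exists x y, Vplus R d y /\ z = cplx x (- y)].
Arguments Ximinus R d : clear implicits.

Definition boundary (T : topologicalType) (A : set T) : set T :=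
  closure A `\` A°.

From HB Require Import structures.
From mathcomp Require Import all_boot all_order all_algebra.
From mathcomp Require Import all_classical all_reals all_analysis.
From mathcomp Require Import complex.
From mathcomp Require Import ring lra.
Import Order.TTheory GRing.Theory Num.Theory numFieldNormedType.Exports.
Local Open Scope ring_scope.
Local Open Scope classical_set_scope.

(* Write [z = a + i b] with [a, b] real.  (i) If [x = u] is real and [z] lies in
   a tube, [beta(u, z) = r] real means [beta(u, b) = 0] and [beta(u, a) = r];
   then [a + r u] is orthogonal to the timelike vector [b], hence not
   timelike, and expanding its square gives [beta(b, b) - 1 + r^2 <= 0], so
   [|r| < 1].  Every [r] in [(-1, 1)] is reached with [u = e1] and
   [z = - r e1 +- i sqrt(1 - r^2) e0].
   (ii) Real points are outside the tubes, and [u] is the limit of the tube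
   points [k u +- i l b], where [b = e0 + u_0 u] is timelike and orthogonal to
   [u], [k -> 1], [l -> 0+] and [k^2 + beta(b, b) l^2 = 1].  Conversely, the
   imaginary part [y] of a point in both closures satisfies [y_0 = 0] and
   [beta(y, y) >= 0], hence [y = 0]. *)

Section MinkowskiForm.
Context {R : rcfType} {d : nat}.
Local Notation V := 'rV[R]_(d.+1).
Implicit Types (b u w x y : V) (k : R).

Lemma betaRC x y : betaR x y = betaR y x.
Proof. by rewrite /betaR mulrC; under eq_bigr do rewrite mulrC. Qed.

Lemma betaRDl x y w : betaR (x + y) w = betaR x w + betaR y w.
Proof.
rewrite /betaR !mxE mulrDl; under eq_bigr do rewrite !mxE mulrDl.
by rewrite big_split /=; ring.
Qed.

Lemma betaRZl k x y : betaR (k *: x) y = k * betaR x y.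
Proof.
rewrite /betaR !mxE mulrBr mulr_sumr -mulrA.
by under eq_bigr do rewrite !mxE -mulrA.
Qed.

Lemma betaR0l y : betaR 0 y = 0.
Proof. by rewrite -(scale0r (0 : V)) betaRZl mul0r. Qed.

Lemma betaRDr x y w : betaR w (x + y) = betaR w x + betaR w y.
Proof. by rewrite betaRC betaRDl !(betaRC w). Qed.

Lemma betaRZr k x y : betaR x (k *: y) = k * betaR x y.
Proof. by rewrite betaRC betaRZl betaRC. Qed.

Lemma betaRNr x y : betaR x (- y) = - betaR x y.
Proof. by rewrite -(scaleN1r y) betaRZr mulN1r. Qed.

Lemma betaR_delta0l y : betaR (delta_mx 0 0) y = y 0 0.
Proof.
rewrite /betaR mxE !eqxx mul1r big1 ?subr0 // => j _.
by rewrite mxE eqxx -val_eqE /= mul0r.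
Qed.

Lemma betaR_time0 w : w 0 0 = 0 ->
  betaR w w = - \sum_(j < d) w 0 (lift ord0 j) ^+ 2.
Proof.
by move=> w0; rewrite /betaR w0 mul0r sub0r; under eq_bigr do rewrite -expr2.
Qed.

Lemma betaR_time0_le0 w : w 0 0 = 0 -> betaR w w <= 0.
Proof.
by move/betaR_time0 ->; rewrite oppr_le0 sumr_ge0 // => j _; rewrite sqr_ge0.
Qed.

Lemma betaR_time0_ge0 w : w 0 0 = 0 -> 0 <= betaR w w -> w = 0.
Proof.
move=> w0; rewrite betaR_time0 // oppr_ge0 => sum_le0.
have sum0 : \sum_(j < d) w 0 (lift ord0 j) ^+ 2 = 0.
  by apply/eqP; rewrite eq_le sum_le0 sumr_ge0 // => j _; rewrite sqr_ge0.
apply/rowP => j; rewrite mxE; case: (unliftP ord0 j) => [k ->|-> //].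
have /eqP := psumr_eq0P (fun i _ => sqr_ge0 (w 0 (lift ord0 i))) sum0 (i := k) isT.
by rewrite sqrf_eq0 => /eqP.
Qed.

(* [w - t b] with [t = w_0 / b_0] has zero time component, and its square is
   [betaR w w + t^2 betaR b b]. *)
Lemma betaR_orth_timelike_le0 b w :
  0 < betaR b b -> betaR w b = 0 -> betaR w w <= 0.
Proof.
move=> bb wb.
have b0 : b 0 0 != 0.
  by apply: contraTneq bb => /betaR_time0_le0; rewrite leNgt => /negbTE ->.
pose t := w 0 0 / b 0 0.
have t0 : (w - t *: b) 0 0 = 0 by rewrite !mxE /t divfK // subrr.
have := betaR_time0_le0 _ t0.
rewrite -scaleNr !(betaRDl, betaRDr, betaRZl, betaRZr) (betaRC b w) wb.
have : 0 <= t ^+ 2 * betaR b b by rewrite mulr_ge0 ?sqr_ge0 ?ltW.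
lra.
Qed.
End MinkowskiForm.

Definition signed {V : zmodType} (s : bool) (v : V) : V := if s then v else - v.

Lemma signedK (V : zmodType) s : involutive (@signed V s).
Proof. by case: s => v //=; rewrite opprK. Qed.

Lemma signed_mxE (V : zmodType) m n s (A : 'M[V]_(m, n)) i j :
  signed s A i j = signed s (A i j).
Proof. by case: s => //=; rewrite mxE. Qed.

Lemma signedZ (K : pzRingType) (V : lmodType K) s (k : K) (v : V) :
  signed s (k *: v) = k *: signed s v.
Proof. by case: s => //=; rewrite scalerN. Qed.

Section Complexification.
Context {R : rcfType} {d : nat}.
Local Notation V := 'rV[R]_(d.+1).
Local Notation CV := 'rV[R[i]]_(d.+1).
Implicit Types (a b c e u x y : V) (s : bool).

Lemma betaR_signedr s x y : betaR x (signed s y) = signed s (betaR x y).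
Proof. by case: s => //=; rewrite betaRNr. Qed.

Lemma betaR_signed s x y : betaR (signed s x) (signed s y) = betaR x y.
Proof. by rewrite betaR_signedr betaRC betaR_signedr signedK betaRC. Qed.

Lemma beta_cplx a b c e :
  beta (cplx a b) (cplx c e) =
    ((betaR a c - betaR b e) +i* (betaR a e + betaR b c))%C.
Proof.
rewrite /beta /betaR !mxE; under eq_bigr do rewrite !mxE.
apply/eqP; rewrite eq_complex /=.
rewrite (raddfB (@complex.Re R : Rcomplex R -> R))
  (raddf_sum (@complex.Re R : Rcomplex R -> R)).
rewrite (raddfB (@complex.Im R : Rcomplex R -> R))
  (raddf_sum (@complex.Im R : Rcomplex R -> R)).
by rewrite /= !big_split /= !sumrN; apply/andP; split; apply/eqP; ring.
Qed.

Lemma realvE x : realv x = cplx x 0.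
Proof. by apply/rowP => j; rewrite !mxE. Qed.

Lemma cplx_inj a b c e : cplx a b = cplx c e -> a = c /\ b = e.
Proof.
move=> abce; split; apply/rowP => j;
  by have := congr1 (fun z : CV => z 0 j) abce; rewrite !mxE => -[].
Qed.

Lemma dSC_cplx a b :
  dSC R d (cplx a b) <-> betaR a a - betaR b b = -1 /\ betaR a b = 0.
Proof.
rewrite /dSC /= beta_cplx (betaRC b a); split.
  move/eqP; rewrite eq_complex /= oppr0 => /andP[/eqP -> /eqP ab].
  by split=> //; lra.
by move=> [-> ->]; apply/eqP; rewrite eq_complex /= addr0 oppr0 !eqxx.
Qed.

Lemma dSC_realv u : dSC R d (realv u) <-> betaR u u = -1.
Proof.
rewrite realvE dSC_cplx betaR0l betaRC betaR0l subr0.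
by split=> [[]|].
Qed.
End Complexification.

Definition tube (R : rcfType) (d : nat) (s : bool) : set 'rV[R[i]]_(d.+1) :=
  dSC R d `&` [set z | exists x y, Vplus R d y /\ z = cplx x (signed s y)].

Lemma Xiplus_tube (R : rcfType) (d : nat) : Xiplus R d = tube R d true.
Proof. by []. Qed.

Lemma Ximinus_tube (R : rcfType) (d : nat) : Ximinus R d = tube R d false.
Proof. by []. Qed.

Section Tubes.
Context {R : rcfType} {d : nat}.
Local Notation V := 'rV[R]_(d.+1).

Lemma dS_not_tube s z : dS R d z -> ~ tube R d s z.
Proof.
move=> [_ [u _ <-]]; rewrite realvE => -[_ [a [y [[_ yy] /cplx_inj[_ y0]]]]].
by move: yy; rewrite -(betaR_signed s) -y0 betaR0l ltxx.
Qed.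

Lemma tube_cplx_orth s (u b : V) (k l : R) :
  betaR u u = -1 -> betaR u b = 0 -> Vplus R d b -> 0 < l ->
  k ^+ 2 + betaR b b * l ^+ 2 = 1 -> tube R d s (cplx (k *: u) (l *: signed s b)).
Proof.
move=> uu ub [b0 bb] l_gt0 kl; split.
  apply/dSC_cplx; rewrite !(betaRZl, betaRZr) betaR_signed betaR_signedr uu ub.
  by split; [lra | case: s => /=; rewrite ?oppr0 !mulr0].
exists (k *: u), (l *: b); split; last by rewrite signedZ.
by split; rewrite ?mxE ?betaRZl ?betaRZr mulr_gt0 ?mulr_gt0.
Qed.

Lemma exists_timelike_orth (u : V) :
  betaR u u = -1 -> exists2 b, Vplus R d b & betaR u b = 0.
Proof.
move=> uu; pose b := delta_mx 0 0 + u 0 0 *: u.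
have ub : betaR u b = 0.
  by rewrite betaRDr betaRZr uu betaRC betaR_delta0l mulrN1 subrr.
have b0 : b 0 0 = 1 + u 0 0 ^+ 2 by rewrite !mxE !eqxx /= expr2.
have b0_gt0 : 0 < b 0 0 by rewrite b0 ltr_pwDl ?sqr_ge0.
exists b => //; split=> //.
by rewrite {1}/b betaRDl betaRZl betaR_delta0l ub mulr0 addr0.
Qed.

Lemma beta_realv_cplx_itv (u a b : V) r :
  betaR u u = -1 -> dSC R d (cplx a b) -> 0 < betaR b b ->
  beta (realv u) (cplx a b) = (r%:C)%C -> -1 < r < 1.
Proof.
move=> uu /dSC_cplx[aa ab] bb.
rewrite realvE beta_cplx !betaR0l => /eqP; rewrite eq_complex /= subr0 addr0.
move=> /andP[/eqP ua /eqP ub].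
have orth : betaR (a + r *: u) b = 0 by rewrite betaRDl betaRZl ab ub mulr0 addr0.
have := betaR_orth_timelike_le0 _ _ bb orth.
rewrite !(betaRDl, betaRDr, betaRZl, betaRZr) (betaRC a u) ua uu.
by move=> ?; apply/andP; split; nra.
Qed.

Lemma dS_tube_beta_exists s r (j : 'I_d) : -1 < r < 1 ->
  exists x z, dS R d x /\ tube R d s z /\ beta x z = (r%:C)%C.
Proof.
move=> /andP[r_gtN1 r_lt1].
pose e0 : V := delta_mx 0 0.
pose e1 : V := delta_mx 0 (lift ord0 j).
have e1e1 : betaR e1 e1 = -1.
  rewrite /betaR (bigD1 j) //= big1 => [|k kj]; rewrite !mxE !eqxx.
    by rewrite -val_eqE /=; ring.
  by rewrite (inj_eq lift_inj) (negbTE kj) mul0r.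
have e1e0 : betaR e1 e0 = 0 by rewrite betaRC betaR_delta0l mxE.
have e0e0 : betaR e0 e0 = 1 by rewrite betaR_delta0l mxE !eqxx.
pose t := Num.sqrt (1 - r ^+ 2).
have t_gt0 : 0 < t by rewrite sqrtr_gt0; nra.
have tt : t ^+ 2 = 1 - r ^+ 2 by rewrite sqr_sqrtr //; nra.
exists (realv e1), (cplx ((- r) *: e1) (signed s (t *: e0))); split; [|split].
- by split; [apply/dSC_realv | exists e1].
- split; last first.
    exists ((- r) *: e1), (t *: e0); split => //; split.
      by rewrite mxE /e0 mxE !eqxx mulr1.
    by rewrite betaRZl betaRZr betaR_delta0l mxE !eqxx mulr1 mulr_gt0.
  apply/dSC_cplx; rewrite betaR_signed betaR_signedr !(betaRZl, betaRZr).
  rewrite e1e1 e1e0 e0e0 mulr0; split.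
    by rewrite mulr1 -expr2 tt; ring.
  by rewrite mulr0; case: s => /=; rewrite ?oppr0.
- rewrite realvE beta_cplx !betaR0l betaR_signedr !betaRZr e1e1 e1e0 mulr0.
  by rewrite mulrN1 opprK subr0 addr0; case: s => /=; rewrite ?oppr0.
Qed.

Lemma dS_tube_beta_range s : (1 <= d)%N ->
  [set r : R | exists x z, dS R d x /\ tube R d s z /\ beta x z = (r%:C)%C] =
  `]-1, 1[%classic.
Proof.
move=> d_ge1; apply/seteqP; split => r /=; rewrite in_itv /=.
  move=> [x [z [[dSx [u _ ex]] [[dSz [a [y [[_ yy] ez]]]] xz]]]]; subst x z.
  have uu : betaR u u = -1 by apply/dSC_realv.
  by move: xz; apply: beta_realv_cplx_itv => //; rewrite betaR_signed.
exact: (dS_tube_beta_exists s r (Ordinal d_ge1)).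
Qed.
End Tubes.

(* The metric of [R[i]] is copied from [R[i]^o], where the normed-space
   lemmas have to be instantiated. *)
Section ComplexTopology.
Context {R : realType}.

Lemma continuous_Re : continuous (@complex.Re R).
Proof.
move=> w; apply/(@cvgrPdist_lt _ _ _ _ (nbhs_filter (w : R[i]^o))) => e e_gt0.
have : \forall v \near w, `|w - v| < (e%:C)%C by apply: near_ball; rewrite ltcR.
apply: filterS => v wv; rewrite -ltcR; apply: le_lt_trans wv.
by rewrite -(raddfB (@complex.Re R : Rcomplex R -> R)) normc_ge_Re.
Qed.

Lemma continuous_Im : continuous (@complex.Im R).
Proof.
have -> : @complex.Im R = fun v => - complex.Re (v * 'i%C).
  by apply/funext => v; rewrite ReiNIm opprK.
move=> w; apply: (cvgN (FF := nbhs_filter w)).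
have wi : (fun v : R[i] => v * 'i%C) @ w --> w * 'i%C.
  by apply: (cvgM (FF := nbhs_filter w)); [exact: cvg_id | exact: cvg_cst].
exact: cvg_comp wi (continuous_Re _).
Qed.

Lemma continuous_real_complex : continuous (fun r : R => (r%:C)%C).
Proof.
move=> r; apply/(@cvgrPdist_lt _ R[i]^o _ _ (nbhs_filter r)) => e.
rewrite ltcE /= => /andP[/eqP Ime Ree].
have : \forall t \near r, `|r - t| < complex.Re e by exact: near_ball.
apply: filterS => t rt.
rewrite -rmorphB normc_def /= expr0n addr0 sqrtr_sqr ltcE /= Ime eqxx.
by case: e Ime Ree rt.
Qed.
End ComplexTopology.

Lemma continuous_minkowski (K : numFieldType) (T : topologicalType) n
    (f g : T -> 'rV[K]_n.+1) :
  (forall j, continuous (fun t => f t 0 j)) ->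
  (forall j, continuous (fun t => g t 0 j)) ->
  continuous (fun t => f t 0 0 * g t 0 0 -
    \sum_(j < n) f t 0 (lift ord0 j) * g t 0 (lift ord0 j)).
Proof.
move=> fc gc t; apply: cvgB; first by apply: cvgM; [exact: fc | exact: gc].
apply: continuous_big => [|j _]; first exact: add_continuous.
by move=> s; apply: cvgM; [exact: fc | exact: gc].
Qed.

Section TubeClosure.
Context {R : realType} {d : nat}.
Local Notation V := 'rV[R]_(d.+1).
Local Notation CV := 'rV[R[i]]_(d.+1).
Local Notation imv z := (map_mx (@complex.Im R) z).

Lemma continuous_beta : continuous (fun z : CV => beta z z).
Proof. by apply: continuous_minkowski => j; exact: coord_continuous. Qed.

Lemma continuous_imv_coord (j : 'I_d.+1) : continuous (fun z : CV => imv z 0 j).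
Proof.
move=> z; under eq_fun do rewrite mxE.
by apply: continuous_comp; [exact: coord_continuous | exact: continuous_Im].
Qed.

Lemma closed_dSC : closed (dSC R d).
Proof.
have closed_m1 : closed [set (-1 : R[i])].
  exact/accessible_closed_set1/hausdorff_accessible/(@norm_hausdorff _ R[i]^o).
exact: (continuous_closedP _).1 continuous_beta _ closed_m1.
Qed.

Lemma imv_cplx (a b : V) : imv (cplx a b) = b.
Proof. by apply/rowP => j; rewrite !mxE. Qed.

Lemma closure_tube s : closure (tube R d s) `<=`
  [set z | dSC R d z /\ 0 <= signed s (imv z 0 0) /\ 0 <= betaR (imv z) (imv z)].
Proof.
rewrite closureE; apply: smallest_sub.
  apply: closedI; [exact: closed_dSC | apply: closedI].
  - apply: (continuous_closedP _).1 _ _ (closed_ge (y := 0)) => z.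
    case: s => /=; first exact: continuous_imv_coord.
    by apply: (cvgN (FF := nbhs_filter z)); exact: continuous_imv_coord.
  - apply: (continuous_closedP _).1 _ _ (closed_ge (y := 0)).
    by apply: continuous_minkowski => j; exact: continuous_imv_coord.
move=> z [dSz [a [y [[y_gt0 yy] ez]]]]; split=> //.
by rewrite ez imv_cplx betaR_signed signed_mxE signedK; split; exact: ltW.
Qed.

Lemma closure_tubes_sub_dS :
  closure (tube R d true) `&` closure (tube R d false) `<=` dS R d.
Proof.
move=> z [/closure_tube[dSz [Im0_ge0 imz_ge0]] /closure_tube[_ [Im0_le0 _]]].
have Im0 : imv z 0 0 = 0 by apply/eqP; rewrite eq_le -oppr_ge0 Im0_le0 Im0_ge0.
have imz0 := betaR_time0_ge0 _ Im0 imz_ge0.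
have zE : realv (map_mx (@complex.Re R) z) = z.
  apply/rowP => j; have := congr1 (fun m : 'rV[R]_(d.+1) => m 0 j) imz0.
  by rewrite !mxE; case: (z 0 j) => a b /= ->.
by split=> //; exists (map_mx (@complex.Re R) z).
Qed.

Lemma cplx_scaleE (k l : R) (u b : V) :
  cplx (k *: u) (l *: b) = (k%:C)%C *: realv u + ((l%:C)%C * 'i%C) *: realv b.
Proof.
apply/rowP => j; rewrite !mxE; apply/eqP.
by rewrite eq_complex /=; apply/andP; split; apply/eqP; ring.
Qed.

Lemma cvg_cplx_scale {T : Type} {F : set_system T} {FF : Filter F}
    (f g : T -> R) (k l : R) (u b : V) :
  f @ F --> k -> g @ F --> l ->
  cplx (f t *: u) (g t *: b) @[t --> F] --> cplx (k *: u) (l *: b).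
Proof.
move=> fk gl; rewrite cplx_scaleE; under eq_cvg do rewrite cplx_scaleE.
have fkC := cvg_comp _ _ fk (continuous_real_complex k).
have glC := cvg_comp _ _ gl (continuous_real_complex l).
exact: (cvgD (cvgZ fkC (cvg_cst (realv u)))
  (cvgZ (cvgM glC (cvg_cst 'i%C)) (cvg_cst (realv b)))).
Qed.

(* [(k e, l e)] rationally parametrises the ellipse [k^2 + (betaR b b) l^2 = 1]
   and tends to [(1, 0)] as [e -> 0]. *)
Lemma realv_closure_tube s (u b : V) :
  betaR u u = -1 -> betaR u b = 0 -> Vplus R d b -> closure (tube R d s) (realv u).
Proof.
move=> uu ub Vb; have bb_gt0 : 0 < betaR b b by case: Vb.
pose h e := (1 + betaR b b * e ^+ 2)^-1.
pose k e := 2 * h e - 1.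
pose l e := 2 * e * h e.
have den_gt0 e : 0 < 1 + betaR b b * e ^+ 2 by have := sqr_ge0 e; nra.
have curve_tube e : 0 < e -> tube R d s (cplx (k e *: u) (l e *: signed s b)).
  move=> e_gt0; apply: tube_cplx_orth => //.
    by rewrite /l /h mulr_gt0 ?mulr_gt0 // invr_gt0.
  by have := den_gt0 e; rewrite /k /l /h lt0r => /andP[? _]; field.
have h_cvg : h e @[e --> 0] --> h 0.
  apply: cvgV; first by rewrite gt_eqF.
  apply: cvgD; first exact: cvg_cst.
  by apply: cvgM; [exact: cvg_cst | exact: exprn_continuous].
have k_cvg : k e @[e --> 0] --> k 0.
  by apply: cvgB; [apply: cvgM; [exact: cvg_cst | exact: h_cvg] | exact: cvg_cst].
have l_cvg : l e @[e --> 0] --> l 0.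
  by apply: cvgM; [apply: cvgM; [exact: cvg_cst | exact: cvg_id] | exact: h_cvg].
have h0 : h 0 = 1 by rewrite /h expr0n /= mulr0 addr0 invr1.
have k0 : k 0 = 1 by rewrite /k h0; ring.
have l0 : l 0 = 0 by rewrite /l mulr0 mul0r.
have curve0 : cplx (k 0 *: u) (l 0 *: signed s b) = realv u.
  by rewrite k0 l0 scale1r scale0r realvE.
have curve_cvg : cplx (k e *: u) (l e *: signed s b) @[e --> 0] --> realv u.
  by rewrite -curve0; apply: cvg_cplx_scale.
apply: (closed_cvg _ (@closed_closure _ _) _ _ (cvg_at_right_filter curve_cvg)).
near=> e; apply/subset_closure/curve_tube.
by near: e; exact: nbhs_right_gt.
Unshelve. all: by end_near.
Qed.

Lemma dS_sub_closure_tube s : dS R d `<=` closure (tube R d s).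
Proof.
move=> z [dSz [u _ uz]]; subst z.
have uu : betaR u u = -1 by apply/dSC_realv.
have [b Vb ub] := exists_timelike_orth _ uu.
exact: realv_closure_tube _ _ _ uu ub Vb.
Qed.

Lemma dS_boundary_tubes :
  dS R d = boundary (tube R d true) `&` boundary (tube R d false).
Proof.
apply/seteqP; split=> [z dSz | z [[cl_p _] [cl_m _]]]; last first.
  exact: closure_tubes_sub_dS.
do 2 split; try exact: dS_sub_closure_tube.
all: by move/interior_subset; exact: dS_not_tube.
Qed.
End TubeClosure.

Theorem mainTheorem20 (R : realType) (d : nat) (hd : (1 <= d)%N) :
  ([set r : R | exists x z, dS R d x /\ Xiplus R d z /\ beta x z = (r%:C)%C]
     = `]-1, 1[%classic
   /\ [set r : R | exists x z, dS R d x /\ Ximinus R d z /\ beta x z = (r%:C)%C]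
     = `]-1, 1[%classic)
  /\ dS R d = boundary (Xiplus R d) `&` boundary (Ximinus R d).
Proof.
rewrite Xiplus_tube Ximinus_tube.
by split; [split; exact: dS_tube_beta_range | exact: dS_boundary_tubes].
Qed.
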